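(* Let $(X,\mu)$ be a probability space. If $\mu$ is nontrivial (there exist measurable sets of measure strictly between $0$ and $1$), then for any $\mu$-preserving transformation $T$ of $X$ there exists a sequence $\{A_n\}$ of measurable subsets of $X$ with $\sum_n\mu(A_n)=\infty$ which is not Borel-Cantelli. Furthermore, if $\mu$ is non-atomic, then for any $\mu$-preserving transformation $T$ there exists a sequence $\{A_n\}$ of measurable subsets with $\sum_n\mu(A_n)=\infty$ such that for $\mu$-a.e. $x\in X$ there are at most finitely many $n$ with $T^nx\in A_n$.
   Context: A sequence of measurable sets $A_n$ with $\sum\mu(A_n)=\infty$ is Borel-Cantelli if for $\mu$-a.e. $x$ there are infinitely many $n$ with $T^nx\in A_n$. *)

From HB Require Import structures.
From mathcomp Require Import all_boot all_order all_algebra.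
From mathcomp Require Import all_classical all_reals all_analysis.
Set Implicit Arguments. Unset Strict Implicit. Unset Printing Implicit Defensive.
Import Order.TTheory GRing.Theory Num.Theory.
Local Open Scope classical_set_scope.
Local Open Scope ring_scope.

Definition measure_preserving d (X : measurableType d) (R : realType)
  (mu : set X -> \bar R) (T : X -> X) : Prop :=
  measurable_fun setT T /\
  forall A : set X, measurable A -> mu (T @^-1` A) = mu A.

Definition nontrivial_prob d (X : measurableType d) (R : realType)
  (mu : set X -> \bar R) : Prop :=
  exists A : set X, measurable A /\ (0 < mu A)%E /\ (mu A < 1)%E.

Definition nonatomic d (X : measurableType d) (R : realType)
  (mu : set X -> \bar R) : Prop :=
  forall A : set X, measurable A -> (0 < mu A)%E ->
    exists B : set X, [/\ measurable B, B `<=` A, (0 < mu B)%E & (mu B < mu A)%E].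

Definition borel_cantelli d (X : measurableType d) (R : realType)
  (mu : {measure set X -> \bar R}) (T : X -> X) (A : nat -> set X) : Prop :=
  {ae mu, forall x, forall N : nat, exists2 n : nat, (N <= n)%N & A n (iter n T x)}.

From HB Require Import structures.
From mathcomp Require Import all_boot all_order all_algebra.
From mathcomp Require Import all_classical all_reals all_analysis.
From mathcomp Require Import lra zify.

Set Implicit Arguments.
Unset Strict Implicit.
Unset Printing Implicit Defensive.

Import Order.TTheory GRing.Theory Num.Theory.
Local Open Scope classical_set_scope.
Local Open Scope ring_scope.

(* If mu has an atom A, Poincare recurrence gives m > 0 such that A meets T^-m A
   in positive measure; A being an atom, T^-m A is contained in A up to a null
   set, hence so is every T^-km A.  The targets A_n = A for m | n (empty
   otherwise) have divergent measure sum, yet almost every point hitting one of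
   them lies in A, whose complement is not null since mu is nontrivial.
   If mu is non-atomic, repeated halving gives sets B_k of positive measure at
   most 2^-(k+1).  Time is cut into blocks of lengths L_k with L_k mu(B_k) >= 1,
   and on the k-th block the targets are preimages of B_k timed so that the block
   is hit only when x lands in one fixed preimage of B_k.  The target measures
   sum to +oo, while by the first Borel-Cantelli lemma almost every x hits only
   finitely many blocks. *)

Lemma measurable_preimageT d d' (X : measurableType d) (Y : measurableType d')
    (f : X -> Y) (A : set Y) :
  measurable_fun setT f -> measurable A -> measurable (f @^-1` A).
Proof. by move=> mf mA; rewrite -[_ @^-1` _]setTI; exact: mf. Qed.

Lemma measure_preserving_iter d (X : measurableType d) (R : realType)
    (mu : set X -> \bar R) (T : X -> X) (n : nat) :
  measure_preserving mu T -> measure_preserving mu (iter n T).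
Proof.
move=> [mT muT]; elim: n => [|n [mTn muTn]].
  by split=> //; exact: measurable_id.
split=> [|A mA]; first exact: measurableT_comp.
rewrite -[iter n.+1 T @^-1` A]/(iter n T @^-1` (T @^-1` A)) muTn ?muT //.
exact: measurable_preimageT.
Qed.

Lemma nneseries_blocks_pinfty (R : realType) (u : nat -> \bar R)
    (s : nat -> nat) (c : R) :
  (forall n, 0 <= u n)%E -> 0 < c -> (forall k, (s k <= s k.+1)%N) ->
  (forall k, c%:E <= \sum_(s k <= n < s k.+1) u n)%E ->
  (\sum_(0 <= n <oo) u n = +oo)%E.
Proof.
move=> u_ge0 c_gt0 s_incr c_le_block.
have partial_ge K : ((K%:R * c)%:E <= \sum_(0 <= n < s K) u n)%E.
  elim: K => [|K IH]; first by rewrite mul0r sume_ge0.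
  rewrite (big_cat_nat (leq0n (s K)) (s_incr K)) -natr1 mulrDl mul1r EFinD.
  exact: leeD.
apply/eqyP => r r_gt0; pose K := (Num.truncn (r / c)).+1.
apply: le_trans (nneseries_lim_ge (s K) (fun n _ _ => u_ge0 n)).
apply: le_trans (partial_ge K); rewrite lee_fin -ler_pdivrMr //.
exact/ltW/truncnS_gt.
Qed.

Section nonatomic_probability.
Context d (X : measurableType d) (R : realType) (mu : probability X R).
Hypothesis mu_nonatomic : nonatomic mu.

Let EFin_fine {A : set X} : measurable A -> (fine (mu A))%:E = mu A.
Proof. by move=> mA; rewrite fineK ?fin_num_measure. Qed.

Lemma nonatomic_halve A c : measurable A -> (0 < mu A)%E -> (mu A <= c%:E)%E ->
  exists B, [/\ measurable B, (0 < mu B)%E & (mu B <= (c / 2)%:E)%E].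
Proof.
move=> mA A_gt0 A_le_c.
have [C [mC CA C_gt0 C_lt_A]] := mu_nonatomic mA A_gt0.
have mAC : measurable (A `\` C) by exact: measurableD.
have : mu A = (mu C + mu (A `\` C))%E.
  by rewrite (measureDI mu mA mC) (setIidr CA) addeC.
rewrite -(EFin_fine mA) -(EFin_fine mC) -(EFin_fine mAC) -EFinD.
move=> [muA]; move: A_le_c C_gt0 C_lt_A.
rewrite -(EFin_fine mA) -(EFin_fine mC) lee_fin !lte_fin => A_le_c C_gt0 C_lt_A.
have [C_le_AC|AC_lt_C] := leP (fine (mu C)) (fine (mu (A `\` C))).
- by exists C; rewrite -(EFin_fine mC) lte_fin lee_fin; split=> //; lra.
- by exists (A `\` C); rewrite -(EFin_fine mAC) lte_fin lee_fin; split=> //; lra.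
Qed.

Lemma nonatomic_geometric_sets k : exists B,
  [/\ measurable B, (0 < mu B)%E & (mu B <= (1 / (2 ^ (k + 1))%:R)%:E)%E].
Proof.
elim: k => [|k [B [mB B_gt0 B_le]]].
  have setT_gt0 : (0 < mu setT)%E by rewrite probability_setT lte01.
  have setT_le1 : (mu setT <= 1%:E)%E by rewrite probability_setT.
  have [B [mB B_gt0 B_le]] := nonatomic_halve measurableT setT_gt0 setT_le1.
  by exists B; split=> //; rewrite expn1 mul1r.
have [B' [mB' B'_gt0 B'_le]] := nonatomic_halve mB B_gt0 B_le.
exists B'; split=> //; apply: le_trans B'_le _.
by rewrite lee_fin addSn expnS natrM !mul1r invfM mulrC.
Qed.

End nonatomic_probability.

Definition block_start (L : nat -> nat) (k : nat) : nat := (\sum_(j < k) L j)%N.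

Lemma block_startS L k : block_start L k.+1 = (block_start L k + L k)%N.
Proof. exact: big_ord_recr. Qed.

Lemma block_start_homo L : {homo block_start L : i j / (i <= j)%N}.
Proof.
apply: homo_leq => [//|????|k]; first exact: leq_trans.
by rewrite block_startS leq_addr.
Qed.

(* With s := block_start L, the target at a time n of the k-th block
   [s k, s (k+1)) is T^-(s (k+1) - n) (B k): T^n x hits it iff
   T^(s (k+1)) x \in B k, so the whole block is hit through a single event of
   measure mu (B k), while its targets carry mass L k * mu (B k). *)
Definition block_target d (X : measurableType d) (T : X -> X)
    (B : nat -> set X) (L : nat -> nat) (n : nat) : set X :=
  \bigcup_(k in [set k | (block_start L k <= n < block_start L k.+1)%N])
    iter (block_start L k.+1 - n) T @^-1` B k.

Section block_target.
Context d (X : measurableType d) (R : realType) (mu : {measure set X -> \bar R}).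
Variables (T : X -> X) (B : nat -> set X) (L : nat -> nat).
Hypotheses (mpT : measure_preserving mu T) (mB : forall k, measurable (B k)).
Local Notation s := (block_start L).
Local Notation A := (block_target T B L).

Let measurable_preimage_iter n k : measurable (iter n T @^-1` B k).
Proof. exact: measurable_preimageT (measure_preserving_iter n mpT).1 (mB k). Qed.

Lemma measurable_block_target n : measurable (A n).
Proof. by apply: bigcup_measurable => k _. Qed.

Lemma measure_block_target_ge k n :
  (s k <= n < s k.+1)%N -> (mu (B k) <= mu (A n))%E.
Proof.
move=> kn; rewrite -((measure_preserving_iter (s k.+1 - n) mpT).2 _ (mB k)).
apply: le_measure; rewrite ?inE //; first exact: measurable_block_target.
by move=> x Bx; exists k.
Qed.

Lemma block_target_sum_ge k :
  (mu (B k) *+ L k <= \sum_(s k <= n < s k.+1) mu (A n))%E.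
Proof.
have -> : (mu (B k) *+ L k = \sum_(s k <= n < s k.+1) mu (B k))%E.
  by rewrite sumr_const_nat block_startS addKn.
rewrite big_nat_cond [X in (_ <= X)%E]big_nat_cond.
by apply: lee_sum => n /andP[kn _]; exact: measure_block_target_ge.
Qed.

Lemma block_target_hit n x : A n (iter n T x) ->
  exists2 k, (s k <= n < s k.+1)%N & B k (iter (s k.+1) T x).
Proof.
move=> [k /= /andP[kn nk] hit]; exists k; first by rewrite kn.
by rewrite -(subnK (ltnW nk)) iterD.
Qed.

Lemma block_target_finitely_many :
  (\sum_(0 <= k <oo) mu (B k) < +oo)%E ->
  {ae mu, forall x, exists N, forall n, (N <= n)%N -> ~ A n (iter n T x)}.
Proof.
move=> sumB_fin; pose E k := iter (s k.+1) T @^-1` B k.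
have mE k : measurable (E k) := measurable_preimage_iter _ k.
have E_null : mu (lim_sup_set E) = 0.
  apply: lim_sup_set_cvg0 => //.
  suff -> : (\sum_(0 <= k <oo) mu (E k) = \sum_(0 <= k <oo) mu (B k))%E by [].
  by apply: eq_eseriesr => k _; exact: (measure_preserving_iter _ mpT).2.
exists (lim_sup_set E); split=> //.
  by apply: bigcapT_measurable => n; apply: bigcup_measurable => k _.
move=> x /= not_fin N _; apply: contrapT => noE; apply: not_fin.
exists (s N) => n Nn /block_target_hit [k /andP[_ nk] hit]; apply: noE.
exists k => //=; rewrite leqNgt; apply/negP => kN.
have := block_start_homo L kN; lia.
Qed.

End block_target.

Lemma nonatomic_finitely_many_hits d (X : measurableType d) (R : realType)
    (mu : probability X R) :
  nonatomic mu ->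
  forall T : X -> X, measure_preserving mu T ->
  exists A : nat -> set X,
    [/\ (forall n, measurable (A n)),
        (\sum_(0 <= n <oo) mu (A n) = +oo)%E
      & {ae mu, forall x, exists N : nat,
           forall n : nat, (N <= n)%N -> ~ A n (iter n T x)}].
Proof.
move=> na T mpT.
have [B /all_and3 [mB B_gt0 B_small]] := choice (nonatomic_geometric_sets na).
pose b k := fine (mu (B k)).
have b_gt0 k : 0 < b k.
  by apply: fine_gt0; rewrite B_gt0 ltey_eq (fin_num_measure _ _ (mB k)).
(* The k-th block is long enough for its targets to carry total measure 1. *)
pose L k := (Num.truncn (b k)^-1).+1.
have block_mass_ge1 k : (1 <= mu (B k) *+ L k)%E.
  have := truncnS_gt (b k)^-1; rewrite -(ltr_pM2l (b_gt0 k)) mulfV ?gt_eqF //.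
  by move=> /ltW; rewrite mulr_natr -lee_fin EFin_natmul fineK ?fin_num_measure.
exists (block_target T B L); split.
- exact: measurable_block_target L mpT mB.
- apply: (nneseries_blocks_pinfty (s := block_start L) (c := 1)) => [n||k|k].
  + exact: measure_ge0.
  + exact: ltr01.
  + by rewrite block_startS leq_addr.
  exact: le_trans (block_mass_ge1 k) (block_target_sum_ge L mpT mB k).
- apply: block_target_finitely_many => //.
  apply: (@le_lt_trans _ _ (\sum_(0 <= k <oo) (1 / (2 ^ (k + 1))%:R)%:E)%E).
    by apply: lee_nneseries => k *; [exact: measure_ge0|exact: B_small].
  have := cvg_lim _ (@cvg_geometric_eseries_half R 1 0).
  by rewrite /eseries => ->; [exact: ltry|].
Qed.

Lemma finitely_many_hits_not_borel_cantelli d (X : measurableType d)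
    (R : realType) (mu : probability X R) (T : X -> X) (A : nat -> set X) :
  {ae mu, forall x, exists N, forall n, (N <= n)%N -> ~ A n (iter n T x)} ->
  ~ borel_cantelli mu T A.
Proof.
move=> fin BC.
have setT_gt0 : (0 < mu setT)%E by rewrite probability_setT lte01.
have mu_proper : ProperFilter (almost_everywhere mu).
  by apply: ae_properfilter_algebraOfSetsType; exact: setT_gt0.
apply: (@filter_const _ _ mu_proper False).
apply: filterS2 BC fin => x io [N noN].
by have [n Nn hit] := io N; exact: noN n Nn hit.
Qed.

Section negligible_preimage.
Context d (X : measurableType d) (R : realType) (mu : {measure set X -> \bar R}).
Variable S : X -> X.
Hypothesis mpS : measure_preserving mu S.

Lemma negligible_preimage N : mu.-negligible N -> mu.-negligible (S @^-1` N).
Proof.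
case: mpS => mS muS [M [mM M0 NM]]; exists (S @^-1` M); split.
- exact: measurable_preimageT.
- by rewrite muS.
- by move=> x /NM.
Qed.

Lemma negligible_preimage_iter_setD A :
  mu.-negligible (S @^-1` A `\` A) ->
  forall k, mu.-negligible (iter k S @^-1` A `\` A).
Proof.
move=> first_entry; elim=> [|k IH].
  by apply: negligibleS (negligible_set0 mu) => x [].
apply: negligibleS (negligibleU first_entry (negligible_preimage IH)).
move=> x [Akx notAx]; have {}Akx : A (iter k S (S x)) by rewrite -iterSr.
by have [ASx|notASx] := pselect (A (S x)); [left|right].
Qed.

End negligible_preimage.

Section recurrence.
Context d (X : measurableType d) (R : realType).
Variables (mu : {finite_measure set X -> \bar R}) (T : X -> X).
Hypothesis mpT : measure_preserving mu T.

Let measurable_preimage_iter n A : measurable A -> measurable (iter n T @^-1` A).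
Proof. exact: measurable_preimageT (measure_preserving_iter n mpT).1. Qed.

(* The preimages T^-i W are pairwise disjoint and have measure mu W, so their
   union has infinite measure unless mu W = 0. *)
Lemma wandering_set_null W : measurable W ->
  (forall j x, W x -> ~ W (iter j.+1 T x)) -> mu W = 0.
Proof.
move=> mW wandering; pose F i := iter i T @^-1` W.
have mF i : measurable (F i) by exact: measurable_preimage_iter.
have F_disj : trivIset setT F.
  have no_return i j x : (i < j)%N -> F i x -> ~ F j x.
    move=> ij; rewrite /F /= (_ : j = ((j - i).-1.+1 + i)%N); last by lia.
    by rewrite iterD; exact: wandering.
  move=> i j _ _ [x [Fi Fj]]; case: (ltngtP i j) => [ij|ji|//]; exfalso.
  - exact: (no_return i j x).
  - exact: (no_return j i x).
have mU : measurable (\bigcup_n F n) by exact: bigcupT_measurable.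
apply/eqP; rewrite -measure_le0 leNgt; apply/negP => W_gt0.
have : (\sum_(0 <= i <oo) mu (F i) = +oo)%E.
  apply: (nneseries_blocks_pinfty (s := id) (c := fine (mu W))) => [n||k|k].
  - exact: measure_ge0.
  - by apply: fine_gt0; rewrite W_gt0 ltey_eq fin_num_measure.
  - exact: leqnSn.
  - rewrite big_nat1 (measure_preserving_iter k mpT).2 //.
    by rewrite fineK ?fin_num_measure.
rewrite -(measure_semi_bigcup mu mF F_disj mU) => U_infty.
by have := fin_num_measure mu _ mU; rewrite U_infty.
Qed.

Lemma measure_preserving_recurrence A : measurable A -> (0 < mu A)%E ->
  exists2 m, (0 < m)%N & (0 < mu (A `&` iter m T @^-1` A))%E.
Proof.
move=> mA A_gt0; apply: contrapT => no_return.
have return_null j : mu.-negligible (A `&` iter j.+1 T @^-1` A).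
  apply/negligibleP.
    by apply: measurableI => //; exact: measurable_preimage_iter.
  apply/eqP; rewrite -measure_le0 leNgt; apply/negP => pos.
  by apply: no_return; exists j.+1.
pose W := A `\` \bigcup_j iter j.+1 T @^-1` A.
have mW : measurable W.
  apply: measurableD => //; apply: bigcupT_measurable => j.
  exact: measurable_preimage_iter.
have W_null : mu W = 0.
  by apply: wandering_set_null => // j x [_ Wx] [AjX _]; apply: Wx; exists j.
have W_negl : mu.-negligible W by apply/negligibleP.
have : mu.-negligible A.
  apply: negligibleS (negligibleU (negligible_bigcup return_null) W_negl) => x Ax.
  have [[j _ ret]|no_ret] := pselect ((\bigcup_j iter j.+1 T @^-1` A) x).
    by left; exists j.
  by right.
by move/(negligibleP _ mA) => A_null; rewrite A_null ltxx in A_gt0.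
Qed.

End recurrence.

Definition measure_atom d (X : measurableType d) (R : realType)
    (mu : set X -> \bar R) (A : set X) : Prop :=
  [/\ measurable A, (0 < mu A)%E &
      forall B, measurable B -> B `<=` A -> (0 < mu B)%E -> mu B = mu A].

Lemma not_nonatomic_atom d (X : measurableType d) (R : realType)
    (mu : {measure set X -> \bar R}) :
  ~ nonatomic mu -> exists A, measure_atom mu A.
Proof.
move=> not_na; apply: contrapT => no_atom; apply: not_na => A mA A_gt0.
apply: contrapT => no_smaller; apply: no_atom; exists A; split=> // B mB BA B_gt0.
have B_le_A : (mu B <= mu A)%E by apply: le_measure; rewrite ?inE.
apply/eqP; rewrite eq_le B_le_A /= leNgt; apply/negP => B_lt_A.
by apply: no_smaller; exists B.
Qed.

Lemma atom_return_negligible d (X : measurableType d) (R : realType)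
    (mu : {finite_measure set X -> \bar R}) (T : X -> X) (A : set X) (m : nat) :
  measure_preserving mu T -> measure_atom mu A ->
  (0 < mu (A `&` iter m T @^-1` A))%E ->
  forall k, mu.-negligible (iter (k * m) T @^-1` A `\` A).
Proof.
move=> mpT [mA A_gt0 atomA] ret k.
have mpTm := measure_preserving_iter m mpT.
have mTmA : measurable (iter m T @^-1` A).
  exact: measurable_preimageT mpTm.1 mA.
(* [A `&` T^-m A] has positive measure, hence the full measure of both [A] and
   [T^-m A]. *)
have first_entry : mu.-negligible (iter m T @^-1` A `\` A).
  have mATmA : measurable (A `&` iter m T @^-1` A) by exact: measurableI.
  have diff : mu (iter m T @^-1` A `\` A) =
      (mu (iter m T @^-1` A) - mu (iter m T @^-1` A `&` A))%E.
    by apply: measureD => //; rewrite ltey_eq fin_num_measure.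
  have null : mu (iter m T @^-1` A `\` A) = 0.
    by rewrite diff setIC mpTm.2 // atomA // subee ?fin_num_measure.
  by apply/negligibleP; [exact: measurableD|exact: null].
apply: negligibleS (negligible_preimage_iter_setD mpTm first_entry k) => x [].
by rewrite /= iterM.
Qed.

Lemma atom_compl_not_negligible d (X : measurableType d) (R : realType)
    (mu : probability X R) (A : set X) :
  nontrivial_prob mu -> measure_atom mu A -> ~ mu.-negligible (~` A).
Proof.
move=> [S [mS [S_gt0 S_lt1]]] [mA A_gt0 atomA] notA_negl.
have notA_null : mu (~` A) = 0 by apply/negligibleP => //; exact: measurableC.
have A1 : mu A = 1%E.
  have : mu setT = (mu (setT `\` A) + mu (setT `&` A))%E by exact: measureDI.
  by rewrite setTD setTI notA_null add0e probability_setT.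
have SA_null : mu (S `\` A) = 0.
  by apply/negligibleP; [exact: measurableD|apply: negligibleS notA_negl => x []].
have SA : mu S = mu (S `&` A).
  have : mu S = (mu (S `\` A) + mu (S `&` A))%E by exact: measureDI.
  by rewrite SA_null add0e.
move: S_lt1; rewrite SA atomA ?A1 ?ltxx //; first exact: measurableI.
by rewrite -SA.
Qed.

Lemma atom_not_borel_cantelli d (X : measurableType d) (R : realType)
    (mu : probability X R) (T : X -> X) (A : set X) (m : nat) :
  nontrivial_prob mu -> measure_preserving mu T -> measure_atom mu A ->
  (0 < m)%N -> (0 < mu (A `&` iter m T @^-1` A))%E ->
  exists An : nat -> set X,
    [/\ (forall n, measurable (An n)),
        (\sum_(0 <= n <oo) mu (An n) = +oo)%E
      & ~ borel_cantelli mu T An].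
Proof.
move=> nt mpT atomA m_gt0 ret; have [mA A_gt0 _] := atomA.
pose An n := if (m %| n)%N then A else set0.
exists An; split.
- by move=> n; rewrite /An; case: ifP.
- apply: (nneseries_blocks_pinfty (s := fun k => (k * m)%N) (c := fine (mu A))).
  + by move=> n; exact: measure_ge0.
  + by apply: fine_gt0; rewrite A_gt0 ltey_eq fin_num_measure.
  + by move=> k; rewrite leq_mul2r leqnSn orbT.
  move=> k; rewrite big_ltn ?ltn_pmul2r // /An dvdn_mull //.
  rewrite fineK ?fin_num_measure //.
  by apply: leeDl; apply: sume_ge0 => n _; exact: measure_ge0.
- move=> BC; apply: (atom_compl_not_negligible nt atomA).
  have returns_negl := negligible_bigcup (atom_return_negligible mpT atomA ret).
  apply: negligibleS (negligibleU BC returns_negl) => x notAx.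
  have [io|] := pselect (forall N, exists2 n, (N <= n)%N & An n (iter n T x));
    last by left.
  right; have [n _] := io 0%N; rewrite /An; case: ifP => // /dvdnP[k ->] hit.
  by exists k.
Qed.

Theorem proposition1p6 (d : measure_display) (X : measurableType d)
  (R : realType) (mu : probability X R) :
  (nontrivial_prob mu ->
    forall T : X -> X, measure_preserving mu T ->
    exists A : nat -> set X,
      [/\ (forall n, measurable (A n)),
          (\sum_(0 <= n <oo) mu (A n) = +oo)%E
        & ~ borel_cantelli mu T A]) /\
  (nonatomic mu ->
    forall T : X -> X, measure_preserving mu T ->
    exists A : nat -> set X,
      [/\ (forall n, measurable (A n)),
          (\sum_(0 <= n <oo) mu (A n) = +oo)%E
        & {ae mu, forall x, exists N : nat,
             forall n : nat, (N <= n)%N -> ~ A n (iter n T x)}]).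
Proof.
split=> [nt T mpT|]; last exact: nonatomic_finitely_many_hits.
have [na|/not_nonatomic_atom [A atomA]] := pselect (nonatomic mu).
  have [A [mA sumA fin]] := nonatomic_finitely_many_hits na mpT.
  by exists A; split=> //; exact: finitely_many_hits_not_borel_cantelli.
have [mA A_gt0 _] := atomA.
have [m m_gt0 ret] := measure_preserving_recurrence mpT mA A_gt0.
exact: atom_not_borel_cantelli nt mpT atomA m_gt0 ret.
Qed.
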